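(* Let $n\geq 2$. The structure $(\mathbb{Q}^n,<,<_{\mathrm{lex}_1},\ldots,<_{\mathrm{lex}_n})$ is not ultrahomogeneous.
   Context: On $\mathbb{Q}^n$, $<$ is the product order ($\mathbf{a}<\mathbf{b}$ iff $a_i\leq b_i$ for all $i$ and $\mathbf{a}\neq\mathbf{b}$). For $i\leq n$, let $\sigma_i$ be the cyclic permutation of $\{1,\ldots,n\}$ listing $i,i+1,\ldots,n,1,\ldots,i-1$ (so $\sigma_i(1)=i$), and define the $i$th lexicographic order by $\mathbf{a}<_{\mathrm{lex}_i}\mathbf{b}$ iff there is $k\leq n$ with $a_{\sigma_i(j)}=b_{\sigma_i(j)}$ for all $j<k$ and $a_{\sigma_i(k)}<b_{\sigma_i(k)}$. A structure is ultrahomogeneous if every isomorphism between finite substructures (preserving and reflecting all relations) extends to an automorphism. *)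

From mathcomp Require Import all_boot all_order all_algebra.
Set Implicit Arguments. Unset Strict Implicit. Unset Printing Implicit Defensive.
Import Order.TTheory GRing.Theory Num.Theory.
Local Open Scope ring_scope.

(* Ultrahomogeneity: every isomorphism between finite substructures (given as a map f
   on a finite set A of points, injective on A, preserving and reflecting every
   relation between points of A; its image is the target substructure) extends to an
   automorphism (a bijection of V preserving and reflecting every relation). *)
Definition ultrahomogeneous (V : eqType) (I : Type) (R : I -> V -> V -> Prop) : Prop :=
  forall (A : seq V) (f : V -> V),
    {in A &, injective f} ->
    (forall i, {in A &, forall a b, R i a b <-> R i (f a) (f b)}) ->
    exists g : V -> V,
      [/\ bijective g,
          (forall i a b, R i a b <-> R i (g a) (g b)) &
          {in A, forall a, g a = f a}].

(* Q^n, coordinates indexed by 'I_n (0-based: coordinate j stands for j+1). *)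
Definition Qn (n : nat) := {ffun 'I_n -> rat}.

Definition prod_lt (n : nat) (a b : Qn n) : Prop :=
  (forall k : 'I_n, a k <= b k) /\ a != b.

Lemma sigma_proof (n : nat) (i : 'I_n) (j : nat) : ((i + j) %% n < n)%N.
Proof. by apply: ltn_pmod; apply: (leq_ltn_trans (leq0n i)) (ltn_ord i). Qed.

(* sigma i j : the cyclic permutation listing i, i+1, ..., n-1, 0, ..., i-1 (0-based);
   sigma i 0 = i. *)
Definition sigma (n : nat) (i j : 'I_n) : 'I_n := Ordinal (sigma_proof i j).

Definition lex_lt (n : nat) (i : 'I_n) (a b : Qn n) : Prop :=
  exists k : 'I_n,
    (forall j : 'I_n, (j < k)%N -> a (sigma i j) = b (sigma i j)) /\
    a (sigma i k) < b (sigma i k).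

(* The structure (Q^n, <, <_lex_1, ..., <_lex_n): index None is the product order,
   index Some i is the lexicographic order lex_{i+1}. *)
Definition Qn_rel (n : nat) (r : option 'I_n) : Qn n -> Qn n -> Prop :=
  match r with
  | None => @prod_lt n
  | Some i => @lex_lt n i
  end.

From mathcomp Require Import all_boot all_order all_algebra.
Set Implicit Arguments. Unset Strict Implicit. Unset Printing Implicit Defensive.
Import Order.TTheory GRing.Theory Num.Theory.
Local Open Scope ring_scope.

(* The map fixing 0 and sending (2,...,2) to e_1 = (1,0,...,0) is an isomorphism
   of two-point substructures: in both pairs the first point is below the second
   in the product order, hence in every lexicographic order.  It does not extend
   to an automorphism g.  The point c = (-1,1,...,1) satisfies
   c <lex_1 0 <lex_2 c <lex_2 (2,...,2), so g c <lex_1 0 <lex_2 g c <lex_2 e_1.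
   Since 0 and e_1 differ only in the coordinate that lex_2 compares last, this
   forces the first coordinate of g c to be positive, contradicting g c <lex_1 0. *)

Section LexOrders.

Variable n : nat.
Implicit Types (a b c : Qn n.+1) (i j : 'I_n.+1).

Lemma sigma_ord0 i : sigma i ord0 = i.
Proof. by apply: val_inj; rewrite /= addn0 modn_small. Qed.

Lemma sigma_inj i : injective (sigma i).
Proof.
move=> j k /(congr1 val) /= /eqP; rewrite eqn_modDl !modn_small //.
by move/eqP/val_inj.
Qed.

Lemma lex_lt_head i a b : a i < b i -> lex_lt i a b.
Proof. by exists ord0; rewrite sigma_ord0. Qed.

Lemma lex_lt_le_head i a b : lex_lt i a b -> a i <= b i.
Proof.
case=> k [eq_ab lt_ab]; have [k0|k_gt0] := posnP k.
  by rewrite -(sigma_ord0 i) -[ord0](@val_inj _ _ _ k) // ltW.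
by rewrite -(sigma_ord0 i) eq_ab.
Qed.

Lemma prod_lt_lex_lt i a b : prod_lt a b -> lex_lt i a b.
Proof.
case=> le_ab neq_ab.
have [m neq_m] : exists m, a m != b m.
  apply/existsP; rewrite -negb_forall; apply: contra neq_ab => /forallP eq_ab.
  by apply/eqP/ffunP => k; apply/eqP.
have [sigma_inv _ sigmaK] := injF_bij (@sigma_inj i).
pose differ j := a (sigma i j) != b (sigma i j).
have differ_inv : differ (sigma_inv m) by rewrite /differ sigmaK.
case: (arg_minnP val differ_inv) => k neq_k min_k.
exists k; split; last by rewrite lt_neqAle [_ != _]neq_k le_ab.
move=> j lt_jk; apply/eqP; apply: contraT => /(min_k j).
by rewrite leqNgt lt_jk.
Qed.

Lemma prod_le_not_lex_gt i a b : (forall k, a k <= b k) -> ~ lex_lt i b a.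
Proof. by move=> le_ab [k [_]]; rewrite ltNge le_ab. Qed.

Lemma lex_lt_squeeze_last i a b c :
  (forall k, k != sigma i ord_max -> a k = b k) ->
  lex_lt i a c -> lex_lt i c b -> a (sigma i ord_max) < c (sigma i ord_max).
Proof.
move=> eq_off [k1 [eq1 lt1]] [k2 [eq2 lt2]].
have differ_last k : a (sigma i k) < b (sigma i k) -> k = ord_max.
  move=> lt_ab; apply: (@sigma_inj i); apply/eqP; apply: contraTT lt_ab.
  by move/eq_off->; rewrite ltxx.
case: (ltngtP k1 k2) => [lt12|lt21|/val_inj eq12].
- have k1_max : k1 = ord_max by apply: differ_last; rewrite -(eq2 k1 lt12).
  by move: lt12; rewrite k1_max /= ltnNge leq_ord.
- have k2_max : k2 = ord_max by apply: differ_last; rewrite (eq1 k2 lt21).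
  by move: lt21; rewrite k2_max /= ltnNge leq_ord.
- by subst k2; rewrite -(differ_last k1 (lt_trans lt1 lt2)).
Qed.

Lemma Qn_rel_irrefl r a : ~ Qn_rel r a a.
Proof. by case: r => [i [k [_]]|[_]]; rewrite ?ltxx ?eqxx. Qed.

Lemma prod_lt_Qn_rel r a b : prod_lt a b -> Qn_rel r a b.
Proof. by case: r => [i|] //=; apply: prod_lt_lex_lt. Qed.

Lemma prod_lt_not_Qn_rel r a b : prod_lt a b -> ~ Qn_rel r b a.
Proof.
case=> le_ab neq_ab; case: r => [i|] /=; first exact: prod_le_not_lex_gt.
case=> le_ba _; move/eqP: neq_ab; apply; apply/ffunP => k.
by apply/le_anti; rewrite le_ab le_ba.
Qed.

Section PairIsomorphism.

Variables (f : Qn n.+1 -> Qn n.+1) (a b : Qn n.+1).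
Hypotheses (lt_ab : prod_lt a b) (lt_fab : prod_lt (f a) (f b)).

Lemma prod_lt_pair_inj : {in [:: a; b] &, injective f}.
Proof.
have [_ neq_fab] := lt_fab.
move=> x y; rewrite !inE => /orP[]/eqP-> /orP[]/eqP-> // eq_f;
  by move: neq_fab; rewrite eq_f eqxx.
Qed.

Lemma prod_lt_pair_Qn_rel r :
  {in [:: a; b] &, forall x y, Qn_rel r x y <-> Qn_rel r (f x) (f y)}.
Proof.
move=> x y; rewrite !inE => /orP[]/eqP-> /orP[]/eqP->.
- by split=> /Qn_rel_irrefl.
- by split=> _; apply: prod_lt_Qn_rel.
- by split=> [/(prod_lt_not_Qn_rel lt_ab)|/(prod_lt_not_Qn_rel lt_fab)].
- by split=> /Qn_rel_irrefl.
Qed.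

End PairIsomorphism.

End LexOrders.

Lemma Qn_rel_embedding_not_two_to_e0 (m : nat) (g : Qn m.+2 -> Qn m.+2) :
  (forall r x y, Qn_rel r x y <-> Qn_rel r (g x) (g y)) ->
  g [ffun=> 0] = [ffun=> 0] -> g [ffun=> 2] = [ffun k => (k == ord0)%:R] ->
  False.
Proof.
move=> g_rel g0 g2.
pose i1 : 'I_m.+2 := inord 1.
have i1_neq0 : i1 != ord0 by rewrite -val_eqE /= inordK.
pose c : Qn m.+2 := [ffun k => if k == ord0 then -1 else 1].
have /g_rel : Qn_rel (Some ord0) c [ffun=> 0].
  by apply: lex_lt_head; rewrite !ffunE eqxx.
have /g_rel : Qn_rel (Some i1) [ffun=> 0] c.
  by apply: lex_lt_head; rewrite !ffunE (negbTE i1_neq0).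
have /g_rel : Qn_rel (Some i1) c [ffun=> 2].
  by apply: lex_lt_head; rewrite !ffunE (negbTE i1_neq0).
rewrite g0 g2 /= => lt_gc_e0 lt_0_gc lt_gc_0.
have sigma_last : sigma i1 ord_max = ord0.
  by apply: val_inj; rewrite /= inordK // add1n modnn.
have gc_pos : [ffun=> 0] (sigma i1 ord_max) < g c (sigma i1 ord_max).
  apply: (lex_lt_squeeze_last _ lt_0_gc lt_gc_e0) => k.
  by rewrite sigma_last !ffunE => /negbTE->.
move: gc_pos (lex_lt_le_head lt_gc_0).
by rewrite sigma_last !ffunE leNgt => ->.
Qed.

Theorem proposition3p4 (n : nat) (hn : (2 <= n)%N) :
  ~ ultrahomogeneous (@Qn_rel n).
Proof.
case: n hn => [|[|m]] // _ uh.
pose zero : Qn m.+2 := [ffun=> 0].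
pose two : Qn m.+2 := [ffun=> 2].
pose e0 : Qn m.+2 := [ffun k => (k == ord0)%:R].
have neq_0_2 : zero != two by apply/eqP => /ffunP /(_ ord0); rewrite !ffunE.
have lt_0_2 : prod_lt zero two by split=> [k|//]; rewrite !ffunE.
have lt_0_e0 : prod_lt zero e0.
  split=> [k|]; first by rewrite !ffunE; case: (k == ord0).
  by apply/eqP => /ffunP /(_ ord0); rewrite !ffunE eqxx.
pose f v := if v == zero then zero else e0.
have f0 : f zero = zero by rewrite /f eqxx.
have f2 : f two = e0 by rewrite /f eq_sym (negbTE neq_0_2).
have lt_f : prod_lt (f zero) (f two) by rewrite f0 f2.
have [g [_ g_rel g_f]] :=
  uh _ f (prod_lt_pair_inj lt_f) (prod_lt_pair_Qn_rel lt_0_2 lt_f).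
apply: (Qn_rel_embedding_not_two_to_e0 g_rel).
- by rewrite g_f ?inE ?eqxx.
- by rewrite g_f ?inE ?eqxx ?orbT.
Qed.
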